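(* Suppose $K\in\mathbb{K}$ and $K'=K-2\eta L^K$ (i.e. $K_i'=K_i-2\eta L_i^K$ for each $i$). If $$0<\eta\le\frac{1}{2\|R+B^T\mathcal{E}(P^K)B\|_{\max}},$$ then $K'\in\mathbb{K}$.
   Context: Let $N_s\ge 1$, $\Omega=\{1,\dots,N_s\}$; tuples $V=(V_1,\dots,V_{N_s})$ of matrices are combined componentwise (so $(R+B^T\mathcal{E}(P^K)B)_i=R_i+B_i^T\mathcal{E}_i(P^K)B_i$), $\|V\|_{\max}=\max_i\|V_i\|$ (spectral norm). Markovian jump linear system: $x_{t+1}=A_{\omega(t)}x_t+B_{\omega(t)}u_t$, $A_i\in\mathbb{R}^{d\times d}$, $B_i\in\mathbb{R}^{d\times k}$; $\{\omega(t)\}$ is a time-homogeneous Markov chain on $\Omega$ with transition probabilities $p_{ij}$ and initial distribution $\pi$ with $\pi_i>0$; $x_0$ is random, independent of the chain, with $\mathbb{E}[x_0x_0^T]\succ0$. The system is mean-square stabilizable. $Q=(Q_i)\succ0$, $R=(R_i)\succ0$. For $K=(K_i)$, $K_i\in\mathbb{R}^{k\times d}$, $u_t=-K_{\omega(t)}x_t$. $\mathbb{K}$ is the set of $K$ making the closed loop $x_{t+1}=(A_{\omega(t)}-B_{\omega(t)}K_{\omega(t)})x_t$ mean-square stable ($\mathbb{E}[x_tx_t^T]\to0$ for all initial conditions). $\mathcal{E}_i(V)=\sum_jp_{ij}V_j$. For $K\in\mathbb{K}$, $P^K$ is the unique solution of $P_i^K=Q_i+K_i^TR_iK_i+(A_i-B_iK_i)^T\mathcal{E}_i(P^K)(A_i-B_iK_i)$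 and $L_i^K=(R_i+B_i^T\mathcal{E}_i(P^K)B_i)K_i-B_i^T\mathcal{E}_i(P^K)A_i$. *)

From HB Require Import structures.
From mathcomp Require Import all_boot all_order all_algebra.
From mathcomp Require Import boolp classical_sets reals topology normedtype sequences.
Set Implicit Arguments. Unset Strict Implicit. Unset Printing Implicit Defensive.
Import Order.TTheory GRing.Theory Num.Theory numFieldNormedType.Exports.
Local Open Scope ring_scope.
Local Open Scope classical_set_scope.

Section Defs.
Variable R : realType.

Definition vnorm2 n (v : 'cV[R]_n) : R := Num.sqrt (\sum_(i < n) v i 0 ^+ 2).

Definition spec_norm m n (M : 'M[R]_(m, n)) : R :=
  sup [set vnorm2 (M *m v) | v in [set v : 'cV[R]_n | vnorm2 v <= 1]].

Definition max_norm Ns m n (V : 'I_Ns -> 'M[R]_(m, n)) : R :=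
  \big[Num.max/0]_(i < Ns) spec_norm (V i).

Definition symm n (M : 'M[R]_n) := M^T = M.
Definition psd n (M : 'M[R]_n) :=
  symm M /\ forall v : 'cV[R]_n, 0 <= (v^T *m M *m v) 0 0.
Definition posdef n (M : 'M[R]_n) :=
  symm M /\ forall v : 'cV[R]_n, v != 0 -> 0 < (v^T *m M *m v) 0 0.

Definition Eop Ns n (p : 'I_Ns -> 'I_Ns -> R) (V : 'I_Ns -> 'M[R]_n) (i : 'I_Ns)
  : 'M[R]_n := \sum_(j < Ns) p i j *: V j.

Definition stochastic Ns (p : 'I_Ns -> 'I_Ns -> R) :=
  (forall i j, 0 <= p i j) /\ (forall i, \sum_(j < Ns) p i j = 1).
Definition init_distr Ns (pi : 'I_Ns -> R) :=
  (forall i, 0 < pi i) /\ \sum_(i < Ns) pi i = 1.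

Definition Acl Ns d k (A : 'I_Ns -> 'M[R]_d) (B : 'I_Ns -> 'M[R]_(d, k))
  (K : 'I_Ns -> 'M[R]_(k, d)) (i : 'I_Ns) : 'M[R]_d := A i - B i *m K i.

Definition path_prob Ns (p : 'I_Ns -> 'I_Ns -> R) (pi : 'I_Ns -> R) t
  (w : {ffun 'I_t.+1 -> 'I_Ns}) : R :=
  pi (w ord0) * \prod_(s < t) p (w (inord s)) (w (inord s.+1)).

(* state-transition matrix M_{w(t-1)} ... M_{w(0)} along the path *)
Definition path_trans Ns d (M : 'I_Ns -> 'M[R]_d) t
  (w : {ffun 'I_t.+1 -> 'I_Ns}) : 'M[R]_d :=
  foldl (fun acc s => M (w (inord s)) *m acc) 1%:M (iota 0 t).

(* E[x_t x_t^T] for x_{t+1} = M_{w(t)} x_t, with E[x_0 x_0^T] = X0 and x_0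
   independent of the chain: expectation written over the finite path space *)
Definition second_moment Ns d (p : 'I_Ns -> 'I_Ns -> R) (pi : 'I_Ns -> R)
  (M : 'I_Ns -> 'M[R]_d) (X0 : 'M[R]_d) (t : nat) : 'M[R]_d :=
  \sum_(w : {ffun 'I_t.+1 -> 'I_Ns})
     path_prob p pi w *: (path_trans M w *m X0 *m (path_trans M w)^T).

(* K is in the set \mathbb{K}: closed loop is mean-square stable *)
Definition ms_stabilizing Ns d k (p : 'I_Ns -> 'I_Ns -> R) (pi : 'I_Ns -> R)
  (A : 'I_Ns -> 'M[R]_d) (B : 'I_Ns -> 'M[R]_(d, k)) (K : 'I_Ns -> 'M[R]_(k, d)) :=
  forall X0 : 'M[R]_d, psd X0 ->
    forall a b : 'I_d,
      (fun t => second_moment p pi (Acl A B K) X0 t a b) @ \oo --> 0.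

Definition is_PK Ns d k (p : 'I_Ns -> 'I_Ns -> R)
  (A : 'I_Ns -> 'M[R]_d) (B : 'I_Ns -> 'M[R]_(d, k)) (Q : 'I_Ns -> 'M[R]_d)
  (Rc : 'I_Ns -> 'M[R]_k) (K : 'I_Ns -> 'M[R]_(k, d)) (P : 'I_Ns -> 'M[R]_d) :=
  forall i, P i = Q i + (K i)^T *m Rc i *m K i
                  + (Acl A B K i)^T *m Eop p P i *m Acl A B K i.

Definition LK Ns d k (p : 'I_Ns -> 'I_Ns -> R)
  (A : 'I_Ns -> 'M[R]_d) (B : 'I_Ns -> 'M[R]_(d, k))
  (Rc : 'I_Ns -> 'M[R]_k) (K : 'I_Ns -> 'M[R]_(k, d)) (P : 'I_Ns -> 'M[R]_d)
  (i : 'I_Ns) : 'M[R]_(k, d) :=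
  (Rc i + (B i)^T *m Eop p P i *m B i) *m K i - (B i)^T *m Eop p P i *m A i.

End Defs.

(* Write c = 2 eta, L = L^K, W = R + B^T E(P^K) B, and M = A - B K for the closed loop.
   Since K is mean-square stabilizing, E[x_t^T G_(w t) y_t] -> 0 along this closed loop
   for every G.  For a solution N of the homogeneous equation N = M^T E(N) M the
   expectation is constant in t, hence 0; for P^K, which satisfies P^K >= M^T E(P^K) M,
   it is nonincreasing, hence nonnegative.  Starting the chain in a single mode, this
   shows that P^K - (P^K)^T = 0 and P^K >= 0.  Expanding the coupled Lyapunov equation
   around the new gain K' = K - c L gives, modewise,
     Q + K'^T R K' + (A - B K')^T E(P^K) (A - B K') = P^K - 2c L^T L + c^2 L^T W L,
   and c ||W||_max <= 1 makes the right-hand side at most P^K - c L^T L.  So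
   x |-> x^T P^K_(w t) x is a Lyapunov function for the new closed loop: its expectation
   drops by at least E[x_t^T Q x_t] at each step, the series of these terms converges,
   and Q > 0 turns this into E|x_t|^2 -> 0, i.e. mean-square stability of K'. *)

From mathcomp Require Import all_boot all_order all_algebra.
From mathcomp Require Import boolp classical_sets reals topology normedtype sequences.
From mathcomp Require Import ring lra.
Import Order.TTheory GRing.Theory Num.Theory numFieldNormedType.Exports.
Set Implicit Arguments. Unset Strict Implicit. Unset Printing Implicit Defensive.
Local Open Scope ring_scope.
Local Open Scope classical_set_scope.

Section MatrixForms.
Variable R : comRingType.

Definition mxform n (G : 'M[R]_n) (x y : 'cV[R]_n) : R := (x^T *m G *m y) 0 0.

Definition sqnorm n (x : 'cV[R]_n) : R := \sum_(a < n) x a 0 ^+ 2.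

Lemma mxformE n (G : 'M[R]_n) x y :
  mxform G x y = \sum_(a < n) \sum_(b < n) x a 0 * G a b * y b 0.
Proof.
rewrite /mxform mxE; under eq_bigr do rewrite mxE mulr_suml.
rewrite exchange_big /=; apply: eq_bigr => a _; apply: eq_bigr => b _.
by rewrite mxE.
Qed.

Lemma mxform1 n (x : 'cV[R]_n) : mxform 1%:M x x = sqnorm x.
Proof. by rewrite /mxform mulmx1 mxE; apply: eq_bigr => a _; rewrite mxE expr2. Qed.

Lemma mxform_mulmx n m (G : 'M[R]_n) (M : 'M[R]_(n, m)) x y :
  mxform G (M *m x) (M *m y) = mxform (M^T *m G *m M) x y.
Proof. by rewrite /mxform trmx_mul !mulmxA. Qed.

Lemma mxform_tr n (G : 'M[R]_n) x y : mxform G^T x y = mxform G y x.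
Proof.
rewrite /mxform; transitivity ((y^T *m G *m x)^T 0 0); last by rewrite mxE.
by rewrite !trmx_mul trmxK mulmxA.
Qed.

Lemma mxform_sym n (G : 'M[R]_n) x y : G^T = G -> mxform G x y = mxform G y x.
Proof. by move=> sG; rewrite -mxform_tr sG. Qed.

Lemma mxformD n (G H : 'M[R]_n) x y : mxform (G + H) x y = mxform G x y + mxform H x y.
Proof. by rewrite /mxform mulmxDr mulmxDl mxE. Qed.

Lemma mxformN n (G : 'M[R]_n) x y : mxform (- G) x y = - mxform G x y.
Proof. by rewrite /mxform mulmxN mulNmx mxE. Qed.

Lemma mxformB n (G H : 'M[R]_n) x y : mxform (G - H) x y = mxform G x y - mxform H x y.
Proof. by rewrite mxformD mxformN. Qed.

Lemma mxformZ n c (G : 'M[R]_n) x y : mxform (c *: G) x y = c * mxform G x y.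
Proof. by rewrite /mxform -scalemxAr -scalemxAl mxE. Qed.

Lemma mxform_sum n (I : finType) (G : I -> 'M[R]_n) x y :
  mxform (\sum_i G i) x y = \sum_i mxform (G i) x y.
Proof. by rewrite /mxform mulmx_sumr mulmx_suml summxE. Qed.

Lemma mxformDl n (G : 'M[R]_n) x1 x2 y :
  mxform G (x1 + x2) y = mxform G x1 y + mxform G x2 y.
Proof. by rewrite /mxform linearD /= !mulmxDl mxE. Qed.

Lemma mxformDr n (G : 'M[R]_n) x y1 y2 :
  mxform G x (y1 + y2) = mxform G x y1 + mxform G x y2.
Proof. by rewrite /mxform mulmxDr mxE. Qed.

Lemma mxformZl n (G : 'M[R]_n) c x y : mxform G (c *: x) y = c * mxform G x y.
Proof. by rewrite /mxform linearZ /= -!scalemxAl mxE. Qed.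

Lemma mxformZr n (G : 'M[R]_n) c x y : mxform G x (c *: y) = c * mxform G x y.
Proof. by rewrite /mxform -scalemxAr mxE. Qed.

Lemma mxformNl n (G : 'M[R]_n) x y : mxform G (- x) y = - mxform G x y.
Proof. by rewrite -scaleN1r mxformZl mulN1r. Qed.

Lemma mxformNr n (G : 'M[R]_n) x y : mxform G x (- y) = - mxform G x y.
Proof. by rewrite -scaleN1r mxformZr mulN1r. Qed.

Lemma mxform_delta n (G : 'M[R]_n) a b :
  mxform G (delta_mx a 0) (delta_mx b 0) = G a b.
Proof. by rewrite /mxform trmx_delta -rowE -colE !mxE. Qed.

Lemma mxform_inj n (G H : 'M[R]_n) : (forall x y, mxform G x y = mxform H x y) -> G = H.
Proof. by move=> eqGH; apply/matrixP => a b; rewrite -!mxform_delta eqGH. Qed.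

End MatrixForms.

Section FormBounds.
Variable R : realFieldType.

Definition mx_l1norm m n (G : 'M[R]_(m, n)) : R := \sum_a \sum_b `|G a b|.

Lemma mx_l1norm_ge0 m n (G : 'M[R]_(m, n)) : 0 <= mx_l1norm G.
Proof. by apply: sumr_ge0 => a _; apply: sumr_ge0. Qed.

Lemma sqnorm_ge0 n (x : 'cV[R]_n) : 0 <= sqnorm x.
Proof. by apply: sumr_ge0 => a _; apply: sqr_ge0. Qed.

Lemma sqr_coord_le_sqnorm n (x : 'cV[R]_n) a : x a 0 ^+ 2 <= sqnorm x.
Proof. by rewrite /sqnorm (bigD1 a) //= lerDl sumr_ge0 // => b _; apply: sqr_ge0. Qed.

Lemma sqnormZ n c (x : 'cV[R]_n) : sqnorm (c *: x) = c ^+ 2 * sqnorm x.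
Proof. by rewrite /sqnorm mulr_sumr; apply: eq_bigr => a _; rewrite mxE exprMn. Qed.

Lemma sqnorm_eq0 n (x : 'cV[R]_n) : (sqnorm x == 0) = (x == 0).
Proof.
apply/eqP/eqP => [x0|->]; last by rewrite /sqnorm big1 // => a _; rewrite mxE expr0n.
apply/matrixP => a b; rewrite (ord1 b) mxE.
have /eqP := psumr_eq0P (fun i _ => sqr_ge0 (x i 0)) x0 (i := a) isT.
by rewrite sqrf_eq0 => /eqP.
Qed.

Lemma sqnorm_trmx_delta_le m n (X : 'M[R]_(m, n)) a :
  sqnorm (X^T *m delta_mx a 0) <= \sum_l sqnorm (X *m delta_mx l 0).
Proof.
rewrite {1}/sqnorm; apply: ler_sum => l _; rewrite -!colE.
by have := sqr_coord_le_sqnorm (col l X) a; rewrite !mxE.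
Qed.

Lemma norm_mxform_le n (G : 'M[R]_n) x y :
  `|mxform G x y| <= mx_l1norm G * (sqnorm x + sqnorm y).
Proof.
rewrite mxformE /mx_l1norm mulr_suml; apply: le_trans (ler_norm_sum _ _ _) _.
apply: ler_sum => a _; rewrite mulr_suml; apply: le_trans (ler_norm_sum _ _ _) _.
apply: ler_sum => b _; rewrite !normrM mulrAC mulrC ler_wpM2l //.
have := sqr_coord_le_sqnorm x a; have := sqr_coord_le_sqnorm y b.
rewrite -[x a 0 ^+ 2]real_normK ?num_real // -[y b 0 ^+ 2]real_normK ?num_real //.
have : `|x a 0| * `|y b 0| <= `|x a 0| ^+ 2 + `|y b 0| ^+ 2.
  by have := normr_ge0 (x a 0); have := normr_ge0 (y b 0); nra.
lra.
Qed.

Lemma mxform1_amgm n (z y : 'cV[R]_n) (lam : R) : 0 < lam ->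
  2 * mxform 1%:M z y <= lam * sqnorm z + sqnorm y / lam.
Proof.
move=> lam_gt0; rewrite /mxform mulmx1 mxE /sqnorm mulr_sumr mulr_sumr mulr_suml.
rewrite -big_split /=; apply: ler_sum => a _; rewrite mxE.
have : 0 <= (lam * z a 0 - y a 0) ^+ 2 / lam by rewrite divr_ge0 ?sqr_ge0 ?ltW.
have -> : (lam * z a 0 - y a 0) ^+ 2 / lam
          = lam * z a 0 ^+ 2 + y a 0 ^+ 2 / lam - 2 * (z a 0 * y a 0).
  by field; rewrite gt_eqF.
lra.
Qed.

End FormBounds.

Section PositiveDefinite.
Variable R : realType.

Lemma posdef_mxform_ge0 n (G : 'M[R]_n) u : posdef G -> 0 <= mxform G u u.
Proof.
case=> _ Gpos; have [->|u0] := eqVneq u 0; last exact/ltW/Gpos.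
by rewrite /mxform mulmx0 mxE.
Qed.

Lemma psd_mul_tr n m (X : 'M[R]_(n, m)) : psd (X *m X^T).
Proof.
split=> [|v]; first by rewrite /symm trmx_mul trmxK.
by have := sqnorm_ge0 (X^T *m v); rewrite -mxform1 mxform_mulmx trmxK mulmx1.
Qed.

Lemma posdef_unitmx n (G : 'M[R]_n) : posdef G -> G \in unitmx.
Proof.
case=> _ Gpos; rewrite -row_free_unit -kermx_eq0; apply/eqP/row_matrixP => i.
rewrite row0; set r := row i _; apply: contraTeq isT => r0.
have rG0 : r *m G = 0 by rewrite -row_mul mulmx_ker row0.
have rT0 : r^T != 0 by apply: contraNneq r0 => rT0; rewrite -[r]trmxK rT0 linear0.
by have := Gpos _ rT0; rewrite trmxK rG0 mul0mx mxE ltxx.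
Qed.

Lemma posdef_coercive n (G : 'M[R]_n) :
  posdef G -> exists2 c, 0 <= c & forall u, sqnorm u <= c * mxform G u u.
Proof.
move=> Gpd; have [sG _] := Gpd; set Y := invmx G; set c' := 2 * mx_l1norm Y^T.
have c'_ge0 : 0 <= c' by rewrite mulr_ge0 ?mx_l1norm_ge0.
(* Positivity of the form at [(c' + 1) u - G^-1 u], where [G(u, G^-1 u) = |u|^2]. *)
exists (c' + 1) => [|u]; first by rewrite addr_ge0.
set y := Y *m u.
have Guy : mxform G u y = sqnorm u.
  by rewrite -mxform1 /mxform -mulmxA mulKVmx ?posdef_unitmx // mulmx1.
have Gyu : mxform G y u = sqnorm u by rewrite mxform_sym.
have Gyy : mxform G y y <= c' * sqnorm u.
  rewrite /y mxform_mulmx -mulmxA mulmxV ?posdef_unitmx // mulmx1.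
  by have := norm_mxform_le Y^T u u; have := ler_norm (mxform Y^T u u); rewrite /c'; lra.
have c'1_gt0 : 0 < c' + 1 by rewrite ltr_pwDr.
rewrite -(ler_pM2l c'1_gt0) mulrA.
have := posdef_mxform_ge0 ((c' + 1) *: u - y) Gpd.
rewrite mxformDl !mxformDr !mxformZl !mxformZr !mxformNl !mxformNr Guy Gyu.
have := sqnorm_ge0 u; nra.
Qed.

End PositiveDefinite.

Section SpectralNorm.
Variable R : realType.

Lemma vnorm2_mulmx_le_spec_norm n (W : 'M[R]_n) v :
  vnorm2 v <= 1 -> vnorm2 (W *m v) <= spec_norm W.
Proof.
move=> v_le1; apply: ub_le_sup; last by exists v.
exists (Num.sqrt (2 * mx_l1norm (W^T *m W))) => _ [w w_le1 <-].
apply: ler_wsqrtr; rewrite -/(sqnorm _).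
have {}w_le1 : sqnorm w <= 1.
  by rewrite -(sqr_sqrtr (sqnorm_ge0 w)) expr_le1 ?sqrtr_ge0.
rewrite -mxform1 mxform_mulmx mulmx1; apply: le_trans (ler_norm _) _.
apply: le_trans (norm_mxform_le _ _ _) _; rewrite mulrC ler_wpM2r ?mx_l1norm_ge0 //.
lra.
Qed.

Lemma sqnorm_mulmx_le n (W : 'M[R]_n) z lam :
  0 <= lam -> spec_norm W <= lam -> sqnorm (W *m z) <= lam ^+ 2 * sqnorm z.
Proof.
move=> lam_ge0 W_le; have [->|z0] := eqVneq z 0.
  have /eqP sqnorm0 : sqnorm (0 : 'cV[R]_n) == 0 by rewrite sqnorm_eq0.
  by rewrite mulmx0 sqnorm0 mulr0.
have z_gt0 : 0 < sqnorm z by rewrite lt_def sqnorm_eq0 z0 sqnorm_ge0.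
set r := Num.sqrt (sqnorm z).
have r2 : r ^+ 2 = sqnorm z by rewrite sqr_sqrtr ?sqnorm_ge0.
have r2_gt0 : 0 < r ^+ 2 by rewrite r2.
have := vnorm2_mulmx_le_spec_norm W (v := r^-1 *: z).
rewrite /vnorm2 -/(sqnorm _) -/(sqnorm _) -scalemxAr !sqnormZ -r2 exprVn.
rewrite mulVf ?gt_eqF // sqrtr1 lexx => /(_ isT) /le_trans /(_ W_le).
move=> Wv_le; rewrite -ler_pdivrMr // mulrC.
by rewrite -ler_sqrt ?sqr_ge0 // sqrtr_sqr ger0_norm.
Qed.

Lemma mxform_le_spec_norm n (W : 'M[R]_n) z lam :
  0 < lam -> spec_norm W <= lam -> mxform W z z <= lam * sqnorm z.
Proof.
move=> lam_gt0 W_le; have := mxform1_amgm z (W *m z) lam_gt0.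
have -> : mxform 1%:M z (W *m z) = mxform W z z by rewrite /mxform mulmx1 mulmxA.
have : sqnorm (W *m z) / lam <= lam * sqnorm z.
  by rewrite ler_pdivrMr // mulrAC -expr2; exact: sqnorm_mulmx_le (ltW lam_gt0) W_le.
lra.
Qed.

End SpectralNorm.

Section NullSequences.
Variable R : realType.
Implicit Types u v : nat -> R.

Lemma cvg0_sum (I : Type) (r : seq I) (u : I -> nat -> R) :
  (forall i, u i @ \oo --> 0) -> (fun t => \sum_(i <- r) u i t) @ \oo --> 0.
Proof.
move=> u0; elim: r => [|i r IHr].
  by under eq_fun do rewrite big_nil; apply: cvg_cst.
under eq_fun do rewrite big_cons.
have := cvgD (u0 i) IHr; rewrite addr0; apply.
Qed.

Lemma norm_le_cvg0 u v : (forall t, `|u t| <= v t) -> v @ \oo --> 0 -> u @ \oo --> 0.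
Proof.
move=> le_uv v0; apply: (@squeeze_cvgr _ _ _ _ (fun t => - v t) v) => //.
  by apply: nearW => t; rewrite -ler_norml.
by rewrite -oppr0; apply: cvgN.
Qed.

Lemma bounded_series_cvg0 u C :
  (forall t, 0 <= u t) -> (forall n, \sum_(0 <= t < n) u t <= C) -> u @ \oo --> 0.
Proof.
move=> u_ge0 le_uC; apply: cvg_series_cvg_0; apply: nondecreasing_is_cvgn.
  by apply: nondecreasing_series => t _ _; apply: u_ge0.
by exists C => _ [n _ <-]; apply: le_uC.
Qed.

End NullSequences.

Lemma eq_in_foldl (S : eqType) (A : Type) (f g : A -> S -> A) z (l : seq S) :
  (forall s a, s \in l -> f a s = g a s) -> foldl f z l = foldl g z l.
Proof.
elim: l z => //= s l IHl z efg; rewrite efg ?mem_head // IHl // => s' a ls'.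
by rewrite efg // in_cons ls' orbT.
Qed.

Section ModePaths.
Variables (R : realType) (Ns : nat).
Implicit Types (t : nat) (j : 'I_Ns).

Definition extend_path t (w : {ffun 'I_t.+1 -> 'I_Ns}) j : {ffun 'I_t.+2 -> 'I_Ns} :=
  [ffun s : 'I_t.+2 => if (s : nat) == t.+1 then j else w (inord s)].

Lemma extend_path_lt t (w : {ffun 'I_t.+1 -> 'I_Ns}) j s :
  (s < t.+1)%N -> extend_path w j (inord s) = w (inord s).
Proof. by move=> lt_st; rewrite ffunE inordK ?(ltn_eqF lt_st) // ltnS ltnW. Qed.

Lemma extend_path_last t (w : {ffun 'I_t.+1 -> 'I_Ns}) j :
  extend_path w j ord_max = j.
Proof. by rewrite ffunE eqxx. Qed.

Lemma sum_extend_path (V : nmodType) t (F : {ffun 'I_t.+2 -> 'I_Ns} -> V) :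
  \sum_w F w = \sum_(w : {ffun 'I_t.+1 -> 'I_Ns}) \sum_j F (extend_path w j).
Proof.
rewrite pair_bigA /= (reindex (fun u => extend_path u.1 u.2)) //=; apply: onW_bij.
exists (fun w : {ffun 'I_t.+2 -> 'I_Ns} => ([ffun s : 'I_t.+1 => w (inord s)], w ord_max)).
  case=> w j /=; rewrite extend_path_last; congr pair; apply/ffunP => s.
  by rewrite ffunE extend_path_lt // inord_val.
move=> w; apply/ffunP => s; rewrite ffunE; case: eqP => [st|/eqP st].
  by congr (w _); apply: val_inj; rewrite /= st.
have lt_st : (s < t.+1)%N by rewrite -ltnS ltn_neqAle st ltn_ord.
by rewrite ffunE inordK // inord_val.
Qed.

Lemma path_prob_extend (p : 'I_Ns -> 'I_Ns -> R) rho t (w : {ffun 'I_t.+1 -> 'I_Ns}) j :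
  path_prob p rho (extend_path w j) = path_prob p rho w * p (w ord_max) j.
Proof.
have inord0 n : inord 0 = ord0 :> 'I_n.+1 by apply: val_inj; rewrite /= inordK.
have inord_max n : inord n = ord_max :> 'I_n.+1 by apply: val_inj; rewrite /= inordK.
rewrite /path_prob big_ord_recr /= -mulrA; congr (_ * (_ * _)).
- by rewrite -!inord0 extend_path_lt.
- by apply: eq_bigr => s _; rewrite !extend_path_lt // ltnS // ltnW.
- by rewrite extend_path_lt // !inord_max extend_path_last.
Qed.

Lemma path_trans_extend d (M : 'I_Ns -> 'M[R]_d) t (w : {ffun 'I_t.+1 -> 'I_Ns}) j :
  path_trans M (extend_path w j) = M (w ord_max) *m path_trans M w.
Proof.
rewrite /path_trans (_ : iota 0 t.+1 = iota 0 t ++ [:: t]); last by rewrite -addn1 iotaD.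
rewrite foldl_cat /= extend_path_lt //; congr (M (w _) *m _).
  by apply: val_inj; rewrite /= inordK.
apply: eq_in_foldl => s a; rewrite mem_iota add0n => /andP[_ lt_st].
by rewrite extend_path_lt // ltnS ltnW.
Qed.

End ModePaths.

Section ExpectedForms.
Variables (R : realType) (Ns d : nat) (p : 'I_Ns -> 'I_Ns -> R).
Hypothesis p_ge0 : forall i j, 0 <= p i j.
Implicit Types (rho : 'I_Ns -> R) (M G H : 'I_Ns -> 'M[R]_d) (x y : 'cV[R]_d).

(* [E[x_t^T G_(w t) y_t]] for the trajectories [x_t], [y_t] of [x_(t+1) = M_(w t) x_t]
   started at [x] and [y] and driven by the same mode path [w], whose initial
   law [rho] need not be normalised. *)
Definition expected_form rho M G x y t :=
  \sum_(w : {ffun 'I_t.+1 -> 'I_Ns}) path_prob p rho w *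
     mxform (G (w ord_max)) (path_trans M w *m x) (path_trans M w *m y).

Definition expected_sqnorm rho M x t := expected_form rho M (fun=> 1%:M) x x t.

Lemma mxform_Eop n (G : 'I_Ns -> 'M[R]_n) i (u v : 'cV[R]_n) :
  mxform (Eop p G i) u v = \sum_j p i j * mxform (G j) u v.
Proof. by rewrite /Eop mxform_sum; apply: eq_bigr => j _; rewrite mxformZ. Qed.

Lemma path_prob_ge0 rho t (w : {ffun 'I_t.+1 -> 'I_Ns}) :
  (forall i, 0 <= rho i) -> 0 <= path_prob p rho w.
Proof. by move=> rho_ge0; rewrite mulr_ge0 ?prodr_ge0. Qed.

Lemma expected_form0 rho M G x y :
  expected_form rho M G x y 0 = \sum_j rho j * mxform (G j) x y.
Proof.
rewrite /expected_form (reindex (fun j : 'I_Ns => [ffun=> j])) /=.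
  apply: eq_bigr => j _.
  by rewrite /path_prob /path_trans /= big_ord0 mulr1 !ffunE !mul1mx.
exists (fun w : {ffun 'I_1 -> 'I_Ns} => w ord0) => [j _|w _]; first by rewrite ffunE.
by apply/ffunP => s; rewrite ffunE (ord1 s).
Qed.

(* Markov property of the mode chain. *)
Lemma expected_formS rho M G x y t :
  expected_form rho M G x y t.+1 =
  expected_form rho M (fun i => (M i)^T *m Eop p G i *m M i) x y t.
Proof.
rewrite /expected_form sum_extend_path; apply: eq_bigr => w _.
under eq_bigr do rewrite path_prob_extend extend_path_last path_trans_extend
  -!mulmxA -mulrA.
by rewrite -mulr_sumr -[in RHS]mxform_mulmx mxform_Eop.
Qed.

Lemma expected_formD rho M G H x y t :
  expected_form rho M (fun i => G i + H i) x y t =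
  expected_form rho M G x y t + expected_form rho M H x y t.
Proof.
by rewrite /expected_form -big_split; apply: eq_bigr => w _; rewrite mxformD mulrDr.
Qed.

Lemma expected_formZ rho M G c x y t :
  expected_form rho M (fun i => c *: G i) x y t = c * expected_form rho M G x y t.
Proof.
by rewrite /expected_form mulr_sumr; apply: eq_bigr => w _; rewrite mxformZ mulrCA.
Qed.

Section NonnegativeInitialLaw.
Variable rho : 'I_Ns -> R.
Hypothesis rho_ge0 : forall i, 0 <= rho i.

Lemma ler_expected_form M G H x t :
  (forall i u, mxform (G i) u u <= mxform (H i) u u) ->
  expected_form rho M G x x t <= expected_form rho M H x x t.
Proof.
move=> leGH; apply: ler_sum => w _.
by rewrite ler_wpM2l ?path_prob_ge0.
Qed.

Lemma expected_form_ge0 M G x t :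
  (forall i u, 0 <= mxform (G i) u u) -> 0 <= expected_form rho M G x x t.
Proof.
move=> G_ge0; apply: sumr_ge0 => w _.
by rewrite mulr_ge0 ?path_prob_ge0.
Qed.

Lemma expected_sqnorm_ge0 M x t : 0 <= expected_sqnorm rho M x t.
Proof. by apply: expected_form_ge0 => i u; rewrite mxform1 sqnorm_ge0. Qed.

Lemma norm_expected_form_le M G x y t :
  `|expected_form rho M G x y t| <=
  (\sum_i mx_l1norm (G i)) * (expected_sqnorm rho M x t + expected_sqnorm rho M y t).
Proof.
rewrite /expected_sqnorm /expected_form -big_split mulr_sumr.
apply: le_trans (ler_norm_sum _ _ _) _; apply: ler_sum => w _ /=.
rewrite normrM ger0_norm ?path_prob_ge0 // !mxform1 -mulrDr mulrCA.
rewrite ler_wpM2l ?path_prob_ge0 //.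
apply: le_trans (norm_mxform_le _ _ _) _; rewrite ler_wpM2r ?addr_ge0 ?sqnorm_ge0 //.
by rewrite (bigD1 (w ord_max)) //= lerDl sumr_ge0 // => i _; apply: mx_l1norm_ge0.
Qed.

Section StableClosedLoop.
Variable M : 'I_Ns -> 'M[R]_d.
Hypothesis sqnorm_cvg0 : forall x, expected_sqnorm rho M x @ \oo --> 0.

Lemma expected_form_cvg0 G x y : expected_form rho M G x y @ \oo --> 0.
Proof.
apply: (norm_le_cvg0 (norm_expected_form_le M G x y)).
have sum_cvg0 : (fun t => expected_sqnorm rho M x t + expected_sqnorm rho M y t)
                 @ \oo --> 0.
  by rewrite -[X in _ --> X](addr0 0); apply: cvgD (sqnorm_cvg0 x) (sqnorm_cvg0 y).
by rewrite -[X in _ --> X](mulr0 (\sum_i mx_l1norm (G i))); apply: cvgMr.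
Qed.

Lemma expected_form_fixpoint_eq0 G :
  (forall i, G i = (M i)^T *m Eop p G i *m M i) ->
  forall x y, \sum_j rho j * mxform (G j) x y = 0.
Proof.
move=> fixG x y; rewrite -(expected_form0 rho M).
have cst_form t : expected_form rho M G x y t = expected_form rho M G x y 0.
  elim: t => // t <-; rewrite expected_formS.
  by congr expected_form; apply: funext => i; rewrite -fixG.
have cvg_form0 : expected_form rho M G x y @ \oo --> expected_form rho M G x y 0.
  by rewrite (funext cst_form); apply: cvg_cst.
exact: cvg_unique cvg_form0 (expected_form_cvg0 G x y).
Qed.

Lemma expected_form_supersolution_ge0 G :
  (forall i u, mxform ((M i)^T *m Eop p G i *m M i) u u <= mxform (G i) u u) ->
  forall x, 0 <= \sum_j rho j * mxform (G j) x x.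
Proof.
move=> superG x; rewrite -(expected_form0 rho M).
have le_form0 t : expected_form rho M G x x t <= expected_form rho M G x x 0.
  elim: t => // t; apply: le_trans; rewrite expected_formS.
  exact: ler_expected_form.
apply: cvgr_to_le (expected_form_cvg0 G x x) _.
exact: nearW.
Qed.

End StableClosedLoop.

Lemma lyapunov_expected_form_cvg0 M V W x :
  (forall i u, 0 <= mxform (V i) u u) -> (forall i u, 0 <= mxform (W i) u u) ->
  (forall i u, mxform (W i) u u + mxform ((M i)^T *m Eop p V i *m M i) u u
               <= mxform (V i) u u) ->
  expected_form rho M W x x @ \oo --> 0.
Proof.
move=> V_ge0 W_ge0 decrV.
pose v t := expected_form rho M V x x t; pose w t := expected_form rho M W x x t.
have decr t : v t.+1 + w t <= v t.
  rewrite /v /w expected_formS addrC -expected_formD.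
  by apply: ler_expected_form => i u; rewrite mxformD.
have partial_le n : \sum_(0 <= t < n) w t + v n <= v 0.
  elim: n => [|n IHn]; first by rewrite big_geq // add0r.
  by rewrite big_nat_recr //=; have := decr n; lra.
apply: (bounded_series_cvg0 (C := v 0)) => [t|n]; first exact: expected_form_ge0.
by have := partial_le n; have := expected_form_ge0 M x n V_ge0; rewrite /v /w; lra.
Qed.

Lemma expected_sqnorm_le_posdef W : (forall i, posdef (W i)) ->
  exists2 C, 0 <= C &
    forall M x t, expected_sqnorm rho M x t <= C * expected_form rho M W x x t.
Proof.
move=> W_pd; have [c c_ge0 c_coer] := fin_all_exists2 (fun i => posdef_coercive (W_pd i)).
exists (\sum_i c i) => [|M x t]; first exact: sumr_ge0.
rewrite -expected_formZ; apply: ler_expected_form => i u; rewrite mxform1 mxformZ.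
apply: le_trans (c_coer i u) _; rewrite ler_wpM2r ?posdef_mxform_ge0 //.
by rewrite (bigD1 i) //= lerDl sumr_ge0.
Qed.

Lemma lyapunov_expected_sqnorm_cvg0 M V W :
  (forall i u, 0 <= mxform (V i) u u) -> (forall i, posdef (W i)) ->
  (forall i u, mxform (W i) u u + mxform ((M i)^T *m Eop p V i *m M i) u u
               <= mxform (V i) u u) ->
  forall x, expected_sqnorm rho M x @ \oo --> 0.
Proof.
move=> V_ge0 W_pd decrV x; have [C C_ge0 le_C] := expected_sqnorm_le_posdef W_pd.
have W_ge0 i u : 0 <= mxform (W i) u u by apply: posdef_mxform_ge0.
apply: (norm_le_cvg0 (v := fun t => C * expected_form rho M W x x t)) => [t|].
  by rewrite ger0_norm ?expected_sqnorm_ge0.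
rewrite -[X in _ --> X](mulr0 C); apply: cvgMr.
exact: lyapunov_expected_form_cvg0.
Qed.

Lemma expected_sqnorm_second_moment M x t :
  expected_sqnorm rho M x t = \tr (second_moment p rho M (x *m x^T) t).
Proof.
rewrite /expected_sqnorm /expected_form /second_moment raddf_sum.
apply: eq_bigr => w _ /=; rewrite mxtraceZ; congr (_ * _).
have -> : path_trans M w *m (x *m x^T) *m (path_trans M w)^T =
          (path_trans M w *m x) *m (path_trans M w *m x)^T by rewrite trmx_mul !mulmxA.
by rewrite mxtrace_mulC /mxtrace big_ord1 /mxform mulmx1.
Qed.

Lemma norm_second_moment_le M X0 t a b :
  `|second_moment p rho M X0 t a b| <=
  2 * mx_l1norm X0 * \sum_l expected_sqnorm rho M (delta_mx l 0) t.
Proof.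
rewrite /second_moment summxE; apply: le_trans (ler_norm_sum _ _ _) _.
rewrite /expected_sqnorm /expected_form exchange_big mulr_sumr /=.
apply: ler_sum => w _; rewrite mxE normrM ger0_norm ?path_prob_ge0 //.
rewrite -mulr_sumr mulrCA ler_wpM2l ?path_prob_ge0 //.
set Phi := path_trans M w.
have -> : (Phi *m X0 *m Phi^T) a b =
          mxform X0 (Phi^T *m delta_mx a 0) (Phi^T *m delta_mx b 0).
  by rewrite mxform_mulmx trmxK mxform_delta.
apply: le_trans (norm_mxform_le _ _ _) _.
rewrite [2 * _]mulrC -mulrA ler_wpM2l ?mx_l1norm_ge0 //.
under eq_bigr do rewrite mxform1.
by have := sqnorm_trmx_delta_le Phi a; have := sqnorm_trmx_delta_le Phi b; lra.
Qed.

Lemma ms_stable_expected_sqnorm_cvg0 M :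
  (forall X0, psd X0 -> forall a b, (fun t => second_moment p rho M X0 t a b) @ \oo --> 0) ->
  forall x, expected_sqnorm rho M x @ \oo --> 0.
Proof.
move=> ms_stable x; rewrite (funext (expected_sqnorm_second_moment M x)).
by apply: cvg0_sum => i; apply: (ms_stable _ (psd_mul_tr x)).
Qed.

Lemma expected_sqnorm_cvg0_ms_stable M :
  (forall x, expected_sqnorm rho M x @ \oo --> 0) ->
  forall X0 a b, (fun t => second_moment p rho M X0 t a b) @ \oo --> 0.
Proof.
move=> sqnorm_cvg0 X0 a b.
apply: (norm_le_cvg0 (fun t => norm_second_moment_le M X0 t a b)).
rewrite -[X in _ --> X](mulr0 (2 * mx_l1norm X0)); apply: cvgMr.
by apply: cvg0_sum => l; apply: sqnorm_cvg0.
Qed.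

End NonnegativeInitialLaw.

Lemma expected_sqnorm_le rho rho' M x t :
  (forall i, 0 <= rho i <= rho' i) ->
  expected_sqnorm rho M x t <= expected_sqnorm rho' M x t.
Proof.
move=> le_rho; apply: ler_sum => w _; rewrite ler_wpM2r ?mxform1 ?sqnorm_ge0 //.
rewrite ler_wpM2r ?prodr_ge0 //; by have /andP[] := le_rho (w ord0).
Qed.

End ExpectedForms.

Lemma mxform_gradient_step (R : comRingType) d k (A E : 'M[R]_d) (B : 'M[R]_(d, k))
    (Rc : 'M[R]_k) (K : 'M[R]_(k, d)) (c : R) u :
  Rc^T = Rc -> E^T = E ->
  let L := (Rc + B^T *m E *m B) *m K - B^T *m E *m A in
  let K' := K - c *: L in
  mxform Rc (K' *m u) (K' *m u) + mxform E ((A - B *m K') *m u) ((A - B *m K') *m u) =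
  mxform Rc (K *m u) (K *m u) + mxform E ((A - B *m K) *m u) ((A - B *m K) *m u)
  - 2 * c * sqnorm (L *m u) + c ^+ 2 * mxform (Rc + B^T *m E *m B) (L *m u) (L *m u).
Proof.
move=> sRc sE L K'.
have defL : L = (Rc + B^T *m E *m B) *m K - B^T *m E *m A by [].
have defK' : K' = K - c *: L by [].
clearbody L K'; set a := K *m u; set z := L *m u; set m := (A - B *m K) *m u.
have K'u : K' *m u = a - c *: z by rewrite defK' mulmxBl -scalemxAl.
have M'u : (A - B *m K') *m u = m + c *: (B *m z).
  rewrite /m !mulmxBl -!mulmxA K'u mulmxBr -scalemxAr.
  by rewrite opprB addrA addrAC.
have Lu : z = Rc *m a - B^T *m (E *m m).
  rewrite /z defL /m /a !mulmxBl !mulmxDl !mulmxBr -!mulmxA.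
  by rewrite opprB addrA.
have cross : mxform E (B *m z) m = mxform Rc z a - sqnorm z.
  have zRa : mxform 1%:M z (Rc *m a) = mxform Rc z a by rewrite /mxform mulmx1 mulmxA.
  have zBEm : mxform 1%:M z (B^T *m (E *m m)) = mxform E (B *m z) m.
    by rewrite /mxform mulmx1 [(B *m z)^T]trmx_mul !mulmxA.
  have : sqnorm z = mxform 1%:M z (Rc *m a - B^T *m (E *m m)) by rewrite -Lu mxform1.
  by rewrite mxformDr mxformNr zRa zBEm => ->; ring.
rewrite K'u M'u mxformD -mxform_mulmx.
rewrite !mxformDl !mxformDr !mxformNl !mxformNr !mxformZl !mxformZr.
rewrite (mxform_sym a z sRc) (mxform_sym m (B *m z) sE) cross.
ring.
Qed.

Section CoupledLyapunov.
Variables (R : realType) (Ns d k : nat).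
Variables (A : 'I_Ns -> 'M[R]_d) (B : 'I_Ns -> 'M[R]_(d, k)).
Variables (p : 'I_Ns -> 'I_Ns -> R) (pi : 'I_Ns -> R).
Variables (Q : 'I_Ns -> 'M[R]_d) (Rc : 'I_Ns -> 'M[R]_k).
Variables (K : 'I_Ns -> 'M[R]_(k, d)) (P : 'I_Ns -> 'M[R]_d).
Hypotheses (p_ge0 : forall i j, 0 <= p i j) (pi_gt0 : forall i, 0 < pi i).
Hypotheses (Q_pd : forall i, posdef (Q i)) (Rc_pd : forall i, posdef (Rc i)).
Hypotheses (K_stab : ms_stabilizing p pi A B K) (PK : is_PK p A B Q Rc K P).

Local Notation MK := (Acl A B K).

Let pi_ge0 i : 0 <= pi i. Proof. exact/ltW. Qed.

Let pi_at (i j : 'I_Ns) : R := if j == i then pi i else 0.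

Let sum_pi_at i (f : 'I_Ns -> R) : \sum_j pi_at i j * f j = pi i * f i.
Proof.
rewrite (bigD1 i) //= big1 ?addr0 => [|j /negPf ji]; first by rewrite /pi_at eqxx.
by rewrite /pi_at ji mul0r.
Qed.

Let pi_at_ge0 i j : 0 <= pi_at i j.
Proof. by rewrite /pi_at; case: eqP. Qed.

Let sqnorm_at_cvg0 i x : expected_sqnorm p (pi_at i) MK x @ \oo --> 0.
Proof.
apply: (norm_le_cvg0 (v := expected_sqnorm p pi MK x)).
  move=> t; rewrite ger0_norm ?expected_sqnorm_ge0 //.
  apply: (expected_sqnorm_le p_ge0) => j; rewrite /pi_at.
  by case: (j =P i) => [->|]; rewrite lexx pi_ge0.
exact: ms_stable_expected_sqnorm_cvg0 K_stab x.
Qed.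

Lemma PK_mxform i u v :
  mxform (P i) u v = mxform (Q i) u v + mxform (Rc i) (K i *m u) (K i *m v)
                     + mxform (Eop p P i) (MK i *m u) (MK i *m v).
Proof. by rewrite PK !mxformD -!mxform_mulmx. Qed.

(* [P - P^T] solves the homogeneous equation, whose only solution is [0]. *)
Lemma PK_symm i : (P i)^T = P i.
Proof.
pose N j := P j - (P j)^T.
have N_fix j : N j = (MK j)^T *m Eop p N j *m MK j.
  apply: mxform_inj => u v; rewrite -mxform_mulmx !mxform_Eop /N mxformB mxform_tr.
  under [RHS]eq_bigr do rewrite mxformB mxform_tr mulrBr.
  rewrite sumrB !PK_mxform !mxform_Eop (mxform_sym _ _ (Q_pd j).1).
  by rewrite (mxform_sym _ _ (Rc_pd j).1); ring.
have N0 x y : mxform (N i) x y = 0.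
  have := expected_form_fixpoint_eq0 p_ge0 (pi_at_ge0 i) (sqnorm_at_cvg0 i) N_fix x y.
  by rewrite sum_pi_at => /eqP; rewrite mulf_eq0 gt_eqF //= => /eqP.
apply/eqP; rewrite eq_sym -subr_eq0; apply/eqP/mxform_inj => x y.
by rewrite N0 /mxform mulmx0 mul0mx mxE.
Qed.

Lemma PK_mxform_ge0 i u : 0 <= mxform (P i) u u.
Proof.
have P_super j w : mxform ((MK j)^T *m Eop p P j *m MK j) w w <= mxform (P j) w w.
  by rewrite -mxform_mulmx PK_mxform lerDr addr_ge0 ?posdef_mxform_ge0.
have := expected_form_supersolution_ge0 p_ge0 (pi_at_ge0 i) (sqnorm_at_cvg0 i) P_super u.
by rewrite sum_pi_at pmulr_rge0.
Qed.

Lemma Eop_PK_symm i : (Eop p P i)^T = Eop p P i.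
Proof.
rewrite /Eop linear_sum; apply: eq_bigr => j _.
by rewrite linearZ /= PK_symm.
Qed.

Variable eta : R.
Hypotheses (eta_gt0 : 0 < eta)
  (eta_le : eta <= 1 / (2 * max_norm (fun i => Rc i + (B i)^T *m Eop p P i *m B i))).

Local Notation W := (fun i => Rc i + (B i)^T *m Eop p P i *m B i).
Local Notation K' := (fun i => K i - (2 * eta) *: LK p A B Rc K P i).

(* Were the max norm [0], [eta_le] would read [eta <= 1 / 0 = 0]. *)
Let max_norm_gt0 : 0 < max_norm W.
Proof.
rewrite lt_def bigmax_ge_id andbT; apply: contraTneq eta_le => ->.
by rewrite mulr0 invr0 mulr0 -ltNge.
Qed.

Let eta_max_norm_le1 : 2 * eta * max_norm W <= 1.
Proof.
have := eta_le; rewrite ler_pdivlMr ?mulr_gt0 //.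
by rewrite mulrAC mulrC.
Qed.

Lemma gradient_step_decrease i u :
  mxform (Q i) u u + mxform ((Acl A B K' i)^T *m Eop p P i *m Acl A B K' i) u u
  <= mxform (P i) u u.
Proof.
rewrite -mxform_mulmx PK_mxform -addrA lerD2l.
have := mxform_gradient_step (A i) (B i) (K i) (2 * eta) u (Rc_pd i).1 (Eop_PK_symm i).
rewrite /= -/(LK p A B Rc K P i) => step.
set z := LK p A B Rc K P i *m u in step *.
have Rc_ge0 := posdef_mxform_ge0 ((K i - (2 * eta) *: LK p A B Rc K P i) *m u) (Rc_pd i).
have W_le : mxform (W i) z z <= max_norm W * sqnorm z.
  apply: mxform_le_spec_norm max_norm_gt0 _.
  exact: le_bigmax 0 (fun i => spec_norm (W i)) i.
have c_ge0 : 0 <= 2 * eta by rewrite mulr_ge0 ?ltW.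
have cz_ge0 : 0 <= 2 * eta * sqnorm z by rewrite mulr_ge0 ?sqnorm_ge0.
have c2_W_le : (2 * eta) ^+ 2 * mxform (W i) z z <= 2 * eta * sqnorm z.
  have cmx_z : 2 * eta * (2 * eta * max_norm W * sqnorm z) <= 2 * eta * sqnorm z.
    by rewrite ler_wpM2l // ler_piMl ?sqnorm_ge0 ?eta_max_norm_le1.
  apply: le_trans (ler_wpM2l (sqr_ge0 (2 * eta)) W_le) (le_trans _ cmx_z).
  by rewrite expr2 !mulrA.
rewrite /Acl in step *; lra.
Qed.

End CoupledLyapunov.

Theorem lemma8 (T : realType) (Ns d k : nat) (HNs : (0 < Ns)%N)
  (A : 'I_Ns -> 'M[T]_d) (B : 'I_Ns -> 'M[T]_(d, k))
  (p : 'I_Ns -> 'I_Ns -> T) (pi : 'I_Ns -> T)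
  (Q : 'I_Ns -> 'M[T]_d) (Rc : 'I_Ns -> 'M[T]_k)
  (Hp : stochastic p) (Hpi : init_distr pi)
  (Hstabilizable : exists K0, ms_stabilizing p pi A B K0)
  (HQ : forall i, posdef (Q i)) (HR : forall i, posdef (Rc i))
  (K : 'I_Ns -> 'M[T]_(k, d)) (HK : ms_stabilizing p pi A B K)
  (P : 'I_Ns -> 'M[T]_d) (HP : is_PK p A B Q Rc K P)
  (eta : T) (Heta0 : 0 < eta)
  (Heta1 : eta <= 1 / (2 * max_norm (fun i => Rc i + (B i)^T *m Eop p P i *m B i))) :
  ms_stabilizing p pi A B (fun i => K i - (2 * eta) *: LK p A B Rc K P i).
Proof.
have [p_ge0 _] := Hp; have [pi_gt0 _] := Hpi.
have pi_ge0 i : 0 <= pi i by apply: ltW.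
move=> X0 _; apply: (expected_sqnorm_cvg0_ms_stable p_ge0 pi_ge0).
apply: (lyapunov_expected_sqnorm_cvg0 p_ge0 pi_ge0 (V := P) _ HQ).
- exact: PK_mxform_ge0 p_ge0 pi_gt0 HQ HR HK HP.
- move=> i u; exact: (gradient_step_decrease p_ge0 pi_gt0 HQ HR HK HP Heta0 Heta1 i u).
Qed.
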